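(* Let $\alpha,\gamma\in\mathbb{C}$ and $\Delta\in\mathbb{C}^*$. Consider extensions of conformal $\mathrm{SV}$-modules $$0\to \mathbb{C}c_\gamma\to E\to V(\alpha,\Delta)\to 0,$$ realized as $E=\mathbb{C}c_\gamma\oplus\mathbb{C}[\partial]v_\Delta$ (as $\mathbb{C}[\partial]$-modules), with $\mathbb{C}c_\gamma$ an $\mathrm{SV}$-submodule and $$L_\lambda v_\Delta=(\partial+\alpha+\Delta\lambda)v_\Delta+f(\lambda)c_\gamma,\quad M_\lambda v_\Delta=g(\lambda)c_\gamma,\quad Y_\lambda v_\Delta=h(\lambda)c_\gamma,$$ for polynomials $f,g,h\in\mathbb{C}[\lambda]$. Nontrivial extensions of this form exist if and only if $\alpha+\gamma=0$ and $\Delta\in\{1,2,-\tfrac12\}$. In these cases they are given, up to equivalence, by: (i) $\Delta=1$: $g=h=0$, $f(\lambda)=a_2\lambda^2$ with $a_2\neq0$; (ii) $\Delta=2$: $g=h=0$, $f(\lambda)=a_3\lambda^3$ with $a_3\neq0$; (iii) $\Delta=-\tfrac12$: $f=g=0$, $h(\lambda)=b_0$ with $b_0\neq0$. In particular, $\mathrm{Ext}(V(\alpha,\Delta),\mathbb{C}c_{-\alpha})$ is $1$-dimensional in each of the cases (i)–(iii).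
   Context: A Lie conformal algebra is a $\mathbb{C}[\partial]$-module $R$ with a $\mathbb{C}$-bilinear $\lambda$-bracket $R\otimes R\to\mathbb{C}[\lambda]\otimes R$, $a\otimes b\mapsto[a_\lambda b]$, satisfying $[\partial a_\lambda b]=-\lambda[a_\lambda b]$, $[a_\lambda\partial b]=(\partial+\lambda)[a_\lambda b]$, $[a_\lambda b]=-[b_{-\lambda-\partial}a]$, and $[a_\lambda[b_\mu c]]=[[a_\lambda b]_{\lambda+\mu}c]+[b_\mu[a_\lambda c]]$. A conformal module over $R$ is a $\mathbb{C}[\partial]$-module $V$ with a linear map $a\mapsto a_\lambda\in\mathrm{End}_{\mathbb{C}}(V)\otimes\mathbb{C}[\lambda]$ such that $[a_\lambda,b_\mu]=[a_\lambda b]_{\lambda+\mu}$ and $(\partial a)_\lambda=[\partial,a_\lambda]=-\lambda a_\lambda$. The Schrödinger–Virasoro conformal algebra $\mathrm{SV}$ is the free $\mathbb{C}[\partial]$-module with basis $L,M,Y$ whose nonzero $\lambda$-brackets (up to skew-symmetry) are $[L_\lambda L]=(\partial+2\lambda)L$, $[L_\lambda Y]=(\partial+\tfrac32\lambda)Y$, $[L_\lambda M]=(\partial+\lambda)M$, $[Y_\lambda Y]=(\partial+2\lambda)M$. For $\alpha,\Delta\in\mathbb{C}$, $V(\alpha,\Delta)=\mathbb{C}[\partial]v_\Delta$ is the free rank-one module with $L_\lambda v_\Delta=(\partial+\alpha+\Delta\lambda)v_\Delta$, $M_\lambda v_\Delta=Y_\lambda v_\Delta=0$. For $\gamma\in\mathbb{C}$,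 $\mathbb{C}c_\gamma$ is the one-dimensional module with $\partial c_\gamma=\gamma c_\gamma$ and all $\lambda$-actions zero. An extension of $W$ by $V$ is an exact sequence of conformal modules $0\to V\to E\to W\to0$; two extensions are equivalent if there is a module homomorphism between the middle terms commuting with the identity maps on $V$ and $W$; an extension is trivial if equivalent to $V\oplus W$. $\mathrm{Ext}(W,V)$ denotes the vector space of extension cocycles modulo coboundaries (cocycles giving trivial extensions). *)

(* The field of complex numbers is R[i] = complex R for an
   arbitrary model R : realType of the real numbers. *)
From HB Require Import structures.
From mathcomp Require Import all_boot all_order all_algebra.
From mathcomp Require Import reals.
From mathcomp Require Export complex.
Set Implicit Arguments. Unset Strict Implicit. Unset Printing Implicit Defensive.
Import Order.TTheory GRing.Theory Num.Theory.
Local Open Scope ring_scope.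

(* The three C[d]-basis elements L, M, Y of the Schroedinger-Virasoro
   conformal algebra SV. *)
Inductive sv_gen := svL | svM | svY.

Section SV.
Variable C : fieldType.

(* The lambda-brackets listed in the paper: [x_l y] = sum_z P(l, d) z, where
   br_given x y z l d is the value of the polynomial P at (lambda, partial)
   = (l, d).  Only the listed (nonzero) brackets. *)
Definition br_given (x y z : sv_gen) (l d : C) : C :=
  match x, y, z with
  | svL, svL, svL => d + 2 * l
  | svL, svY, svY => d + 3%:R / 2%:R * l
  | svL, svM, svM => d + l
  | svY, svY, svM => d + 2 * l
  | _, _, _ => 0
  end.

(* All brackets, the remaining ones obtained by skew-symmetry
   [b_l a] = - [a_{-l-d} b]. *)
Definition sv_br (x y z : sv_gen) (l d : C) : C :=
  match x, y with
  | svY, svL | svM, svL => - br_given y x z (- l - d) d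
  | _, _ => br_given x y z l d
  end.

(* Since SV is
   free over C[d] on L,M,Y, the action of SV is determined by the actions of
   the generators, extended by (d a)_l = -l a_l; consequently
   ([x_l y] = P(l,d) z)  gives  [x_l y]_(l+m) = P(l, -(l+m)) z_(l+m). *)
Definition is_conf_mod (V : lmodType C) (d : V -> V)
    (act : sv_gen -> C -> V -> V) : Prop :=
  [/\ (forall (k : C) (u v : V), d (k *: u + v) = k *: d u + d v),
      (forall x l (k : C) (u v : V),
          act x l (k *: u + v) = k *: act x l u + act x l v),
      (forall x l (v : V), act x l (d v) = d (act x l v) + l *: act x l v)
    & (forall x y l m (v : V),
          act x l (act y m v) - act y m (act x l v)
          = \sum_(z <- [:: svL; svM; svY])
               sv_br x y z l (- (l + m)) *: act z (l + m) v)].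

(* The C[d]-module E = C c_gamma (+) C[d] v_Delta : an element (a, p)
   stands for a c_gamma + p(d) v_Delta. *)
Local Notation extE := ((C^o) * {poly C})%type.

Definition delE (gamma : C) (e : extE) : extE := (gamma * e.1, 'X * e.2).

(* lambda-action on E given by
     L_l v = (d + alpha + Delta l) v + f(l) c,  M_l v = g(l) c,
     Y_l v = h(l) c,  x_l c = 0,
   extended to p(d) v by x_l (p(d) v) = p(d + l) (x_l v). *)
Definition actE (alpha Delta gamma : C) (f g h : {poly C})
    (x : sv_gen) (l : C) (e : extE) : extE :=
  let q := e.2 \Po ('X + l%:P) in
  let k := e.2.[gamma + l] in
  match x with
  | svL => (k * f.[l], q * ('X + (alpha + Delta * l)%:P))
  | svM => (k * g.[l], 0)
  | svY => (k * h.[l], 0)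
  end.

Definition is_ext (alpha Delta gamma : C) (f g h : {poly C}) : Prop :=
  is_conf_mod (delE gamma) (actE alpha Delta gamma f g h).

Definition ext_equiv (alpha Delta gamma : C) (f g h f' g' h' : {poly C}) : Prop :=
  exists phi : extE -> extE,
    [/\ (forall (k : C) (u v : extE), phi (k *: u + v) = k *: phi u + phi v),
        (forall e, phi (delE gamma e) = delE gamma (phi e)),
        (forall x l e, phi (actE alpha Delta gamma f g h x l e)
                       = actE alpha Delta gamma f' g' h' x l (phi e)),
        (forall a : C, phi (a, 0) = (a, 0))
      & (forall e, (phi e).2 = e.2)].

Definition ext_trivial (alpha Delta gamma : C) (f g h : {poly C}) : Prop :=
  ext_equiv alpha Delta gamma f g h 0 0 0.

Definition nontrivial_ext (alpha Delta gamma : C) (f g h : {poly C}) : Prop :=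
  is_ext alpha Delta gamma f g h /\ ~ ext_trivial alpha Delta gamma f g h.

(* Ext(V(alpha,Delta), C c_gamma) = cocycles / coboundaries, where a cocycle
   is a triple (f,g,h) giving an extension and a coboundary is a cocycle giving
   a trivial extension. *)
Definition coboundary (alpha Delta gamma : C) (f g h : {poly C}) : Prop :=
  is_ext alpha Delta gamma f g h /\ ext_trivial alpha Delta gamma f g h.

Definition Ext_dim1 (alpha Delta gamma : C) : Prop :=
  exists f0 g0 h0 : {poly C},
    [/\ is_ext alpha Delta gamma f0 g0 h0,
        ~ coboundary alpha Delta gamma f0 g0 h0
      & forall f g h, is_ext alpha Delta gamma f g h ->
          exists t : C, coboundary alpha Delta gamma
                          (f - t *: f0) (g - t *: g0) (h - t *: h0)].

End SV.

From HB Require Import structures.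
From mathcomp Require Import all_boot all_order all_algebra.
From mathcomp Require Import reals complex ring.
Import Order.TTheory GRing.Theory Num.Theory.
Local Open Scope ring_scope.

(* Unfolding the module axioms on the generator v_Delta, a triple (f, g, h)
   defines an extension iff g = 0 and f, h satisfy two functional equations,
   and two triples give equivalent extensions iff they differ by a change
   v_Delta |-> v_Delta + c c_gamma, which adds c (Delta l + alpha + gamma) to f.
   Setting m = 0 in the L-equation shows that f is such a multiple unless
   alpha + gamma = 0.  In that case the first two derivatives in m at m = 0
   give (n - 1 - Delta) f_n = 0 and n (n - 3) f_n = 0 for the coefficients of
   degree n >= 2, so modulo l only a l^2 (Delta = 1) and a l^3 (Delta = 2)
   survive.  The Y-equation forces h to be a constant, which can be nonzero
   only when alpha + gamma = 0 and Delta = -1/2. *)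

Lemma poly_eq_horner (C : numDomainType) (p q : {poly C}) :
  (forall x, p.[x] = q.[x]) -> p = q.
Proof.
move=> pq; apply/eqP; rewrite -subr_eq0; apply/eqP.
apply: (@roots_geq_poly_eq0 _ _ [seq i%:R | i <- iota 0 (size (p - q))]).
- by apply/allP => x _; rewrite /root !hornerE pq subrr.
- by rewrite map_inj_uniq ?iota_uniq // => m n /eqP; rewrite eqr_nat => /eqP.
- by rewrite size_map size_iota.
Qed.

Lemma comp_poly1 (R : nzRingType) (q : {poly R}) : 1 \Po q = 1.
Proof. by rewrite -polyC1 comp_polyC. Qed.

Lemma natr_neq_mhalf (C : numFieldType) (k : nat) : k%:R != - (1 / 2%:R) :> C.
Proof.
rewrite eq_sym -subr_eq0 -opprD oppr_eq0 mul1r.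
by rewrite gt_eqF // ltr_wpDr ?ler0n // invr_gt0 ltr0n.
Qed.

Lemma eq_by_multiple {R : comPzRingType} (k : R) {x y u v : R} :
  u = v -> x - y = k * (u - v) -> x = y.
Proof. by move=> -> /eqP; rewrite subrr mulr0 subr_eq0 => /eqP. Qed.

Section Extensions.
Variables (C : numFieldType) (alpha Delta gamma : C).
Local Notation beta := (alpha + gamma).
Local Notation extE := ((C^o) * {poly C})%type.
Local Notation delE := (delE gamma).
Local Notation actE := (actE alpha Delta gamma).

(* The c_gamma-components of [L_l, L_m] v_Delta = (l - m) L_(l+m) v_Delta and
   [Y_l, L_m] v_Delta = (l - m/2) Y_(l+m) v_Delta. *)
Definition Lcocycle (f : {poly C}) := forall l m : C,
  (l + Delta * m + beta) * f.[l] - (m + Delta * l + beta) * f.[m]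
  = (l - m) * f.[l + m].

Definition Ycocycle (h : {poly C}) := forall l m : C,
  (l + Delta * m + beta) * h.[l] = (l - m / 2%:R) * h.[l + m].

(* The change of f when v_Delta is replaced by v_Delta + c_gamma. *)
Definition Lcoboundary : {poly C} := Delta *: 'X + beta%:P.

Lemma Lcoboundary_beta0 : beta = 0 -> Lcoboundary = Delta *: 'X.
Proof. by rewrite /Lcoboundary => ->; rewrite addr0. Qed.

Lemma pairE (u v : extE) : u.1 = v.1 -> u.2 = v.2 -> u = v.
Proof. by case: u v => [? ?] [? ?] /= -> ->. Qed.

Lemma delE_linear (k : C) (u v : extE) : delE (k *: u + v) = k *: delE u + delE v.
Proof.
case: u v => [a p] [b q]; apply: pairE => /=; last by rewrite -!mul_polyC; ring.
by rewrite /GRing.scale /=; ring.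
Qed.

Lemma actE_linear f g h x l (k : C) (u v : extE) :
  actE f g h x l (k *: u + v) = k *: actE f g h x l u + actE f g h x l v.
Proof.
case: u v => [a p] [b q].
case: x; (apply: pairE; [rewrite /= hornerD hornerZ /GRing.scale /=; ring | rewrite /=]).
- by rewrite comp_polyD comp_polyZ -!mul_polyC; ring.
- by rewrite scaler0 addr0.
- by rewrite scaler0 addr0.
Qed.

Lemma actE_delE f g h x l (v : extE) :
  actE f g h x l (delE v) = delE (actE f g h x l v) + l *: actE f g h x l v.
Proof.
case: v => [a p].
case: x; (apply: pairE; [rewrite /= !hornerE /GRing.scale /=; ring | rewrite /=]).
- by rewrite comp_polyM comp_polyX -!mul_polyC; ring.
- by rewrite !(mulr0, scaler0, addr0).
- by rewrite !(mulr0, scaler0, addr0).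
Qed.

Lemma actE_bracket f h : Lcocycle f -> Ycocycle h ->
  forall x y l m (v : extE),
  actE f 0 h x l (actE f 0 h y m v) - actE f 0 h y m (actE f 0 h x l v)
  = \sum_(z <- [:: svL; svM; svY]) sv_br x y z l (- (l + m)) *: actE f 0 h z (l + m) v.
Proof.
move=> Lf Yh x y l m [a p]; rewrite !big_cons big_nil addr0.
have shift b c : ('X + b%:P) \Po ('X + c%:P) = 'X + (c + b)%:P.
  by rewrite comp_polyD comp_polyX comp_polyC polyCD addrA.
case: x; case: y; (apply: pairE;
  [rewrite /sv_br /br_given /= ?hornerE ?horner_comp ?hornerE /GRing.scale /= |
   rewrite /sv_br /br_given /=]);
  rewrite ?(scale0r, scaler0, comp_poly0, mul0r, mulr0, oppr0, addr0, add0r, subr0) //.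
- rewrite (addrAC gamma m l).
  by apply: (eq_by_multiple (R := C) p.[gamma + l + m] (Lf l m)); ring.
- rewrite !comp_polyM -!comp_polyA !shift (addrC m l) -!mul_polyC !polyCD !polyCM.
  ring.
- have := Yh m l; rewrite (addrC m l) (addrAC gamma m l) => Yml.
  by apply: (eq_by_multiple (R := C) (- p.[gamma + l + m]) Yml); field.
- by apply: (eq_by_multiple (R := C) p.[gamma + l + m] (Yh l m)); field.
Qed.

Lemma is_extP f g h :
  is_ext alpha Delta gamma f g h <-> [/\ Lcocycle f, g = 0 & Ycocycle h].
Proof.
split=> [[_ _ _ bracket] | [Lf -> Yh]]; last first.
  split; [exact: delE_linear | exact: actE_linear | exact: actE_delE |].
  exact: actE_bracket.
have {}bracket x y l m := congr1 fst (bracket x y l m (0, 1)).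
split.
- move=> l m; have := bracket svL svL l m.
  rewrite !big_cons big_nil /sv_br /br_given /= !comp_poly1 !hornerE /GRing.scale /=.
  by move=> E; apply: (eq_by_multiple 1 E); ring.
- have Xg : 'X * g = 0.
    apply: poly_eq_horner => l; have := bracket svY svY l 0.
    rewrite !big_cons big_nil /sv_br /br_given /= !hornerE /GRing.scale /=.
    by move=> E; apply: (eq_by_multiple (-1) E); ring.
  by move/eqP: Xg; rewrite mulf_eq0 polyX_eq0 => /eqP.
- move=> l m; have := bracket svY svL l m.
  rewrite !big_cons big_nil /sv_br /br_given /= !comp_poly1 !hornerE /GRing.scale /=.
  by move=> E; apply: (eq_by_multiple 1 E); field.
Qed.

Lemma ext_equivP f g h f' g' h' :
  ext_equiv alpha Delta gamma f g h f' g' h' <->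
  [/\ exists c, f' = f + c *: Lcoboundary, g' = g & h' = h].
Proof.
split=> [[phi [phi_lin phi_del phi_act phi_sub phi_quo]] | [[c ->] -> ->]].
- have phiD u v : phi (u + v) = phi u + phi v by have := phi_lin 1 u v; rewrite !scale1r.
  have phiZ k u : phi (k *: u) = k *: phi u.
    by have := phi_lin k u 0; rewrite addr0 (phi_sub 0) addr0.
  set c := (phi (0, 1)).1.
  have phi01 : phi (0, 1) = (c, 1) by apply: pairE => //; rewrite phi_quo.
  have phi_act01 x l := congr1 fst (phi_act x l (0, 1)).
  split.
  - exists c; apply: poly_eq_horner => l; have := phi_act01 svL l.
    have -> : actE f g h svL l (0, 1)
              = ((f.[l] : C^o), 0) + delE (0, 1) + (alpha + Delta * l) *: (0, 1).
      apply: pairE => /=; first by rewrite hornerC /GRing.scale /=; ring.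
      by rewrite comp_poly1 -mul_polyC; ring.
    rewrite !phiD phiZ phi_del phi_sub phi01 /= !hornerE /GRing.scale /=.
    by move=> <-; ring.
  - apply: poly_eq_horner => l; have := phi_act01 svM l.
    by rewrite phi01 /= phi_sub /= !hornerC !mul1r.
  - apply: poly_eq_horner => l; have := phi_act01 svY l.
    by rewrite phi01 /= phi_sub /= !hornerC !mul1r.
- exists (fun e : extE => ((e.1 + c * e.2.[gamma] : C^o), e.2)); split => //.
  + move=> k [a p] [b q]; apply: pairE => //=.
    by rewrite hornerD hornerZ /GRing.scale /=; ring.
  + move=> [a p]; apply: pairE => //=.
    by rewrite hornerM hornerX /GRing.scale /=; ring.
  + move=> x l [a p]; case: x; rewrite /actE; cbn [fst snd]; congr pair;
      rewrite ?horner0 ?mulr0 ?addr0 //.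
    rewrite /Lcoboundary.
    by rewrite !(hornerM, horner_comp, hornerD, hornerZ, hornerX, hornerC); ring.
  + by move=> a /=; rewrite horner0 mulr0 addr0.
Qed.

Lemma ext_trivialP f g h :
  ext_trivial alpha Delta gamma f g h <->
  [/\ exists c, f = c *: Lcoboundary, g = 0 & h = 0].
Proof.
split=> [/ext_equivP [[c fc] <- <-] | [[c ->] -> ->]].
- split=> //; exists (- c).
  by rewrite scaleNr -[f](addrK (c *: Lcoboundary)) -fc sub0r.
- by apply/ext_equivP; split=> //; exists (- c); rewrite scaleNr subrr.
Qed.

Lemma Ycocycle_const {h} : Ycocycle h -> h = (h.[0])%:P.
Proof.
move=> Yh.
have Xh : 'X * h = (-2 * h.[0]) *: Lcoboundary.
  apply: poly_eq_horner => m; have := Yh 0 m; rewrite /Lcoboundary.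
  rewrite !(hornerM, hornerZ, hornerD, hornerX, hornerC) !add0r.
  by move=> E; apply: (eq_by_multiple 2 E); field.
have h0beta : h.[0] * beta = 0.
  have := congr1 (horner^~ 0) Xh; rewrite /Lcoboundary.
  rewrite !(hornerM, hornerZ, hornerD, hornerX, hornerC) => E.
  by apply: (eq_by_multiple 2^-1 E); field.
have [c hc] : exists c, h = c%:P.
  exists (-2 * h.[0] * Delta); apply: (mulfI (negbT (polyX_eq0 C))).
  rewrite Xh /Lcoboundary scalerDr scalerA scale_polyC.
  rewrite -[_ * beta]mulrA h0beta mulr0 addr0.
  by rewrite -mul_polyC commr_polyX.
by rewrite hc hornerC.
Qed.

Lemma YcocycleC b :
  Ycocycle b%:P <-> b = 0 \/ (beta = 0 /\ Delta = - (1 / 2%:R)).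
Proof.
split=> [Yb | [-> | [beta0 Dh]] l m]; last 2 first.
- by rewrite !hornerC !mulr0.
- by rewrite beta0 Dh !hornerC; field.
have := Yb 0 0; have := Yb 0 1; rewrite !hornerC => Y01 Y00.
have [-> | b0] := eqVneq b 0; [by left | right].
have beta0 : beta = 0.
  by apply: (mulIf b0); rewrite mul0r; apply: (eq_by_multiple 1 Y00); ring.
split=> //; apply: (mulIf b0).
by apply: (eq_by_multiple 1 Y01); rewrite beta0; field.
Qed.

Lemma Ycocycle_eq0 {h} :
  Ycocycle h -> (beta = 0 -> Delta != - (1 / 2%:R)) -> h = 0.
Proof.
move=> Yh not_special; have := Yh; rewrite (Ycocycle_const Yh).
case/YcocycleC=> [-> | [beta0 Dh]]; first by rewrite polyC0.
by move: (not_special beta0); rewrite Dh eqxx.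
Qed.

Lemma Lcocycle_Lcoboundary c : Lcocycle (c *: Lcoboundary).
Proof.
by move=> l m; rewrite /Lcoboundary !(hornerZ, hornerD, hornerX, hornerC); ring.
Qed.

Lemma Lcocycle_at0 {f} : Lcocycle f -> beta *: f = f.[0] *: Lcoboundary.
Proof.
move=> Lf; apply: poly_eq_horner => l; have := Lf l 0.
rewrite /Lcoboundary !(hornerZ, hornerD, hornerX, hornerC) !addr0 => E.
by apply: (eq_by_multiple 1 E); ring.
Qed.

(* For fixed l, the Lcocycle identity as a polynomial in m; its m-derivatives
   at m = 0 are the Euler-type equations below. *)
Definition Lslice (f : {poly C}) (l : C) : {poly C} :=
  (l%:P + Delta *: 'X + beta%:P) * (f.[l])%:P - ('X + (Delta * l + beta)%:P) * f
  - (l%:P - 'X) * (f \Po ('X + l%:P)).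

Lemma Lslice_eq0 {f} l : Lcocycle f -> Lslice f l = 0.
Proof.
move=> Lf; apply: poly_eq_horner => m; have := Lf l m.
rewrite /Lslice !(hornerD, hornerN, hornerM, hornerZ, hornerX, hornerC, horner_comp).
rewrite (addrC m l).
by move=> E; apply: (eq_by_multiple 1 E); ring.
Qed.

Section CriticalShift.
Hypotheses (beta0 : beta = 0) (Delta_neq0 : Delta != 0).
Context {f : {poly C}}.
Hypothesis Lf : Lcocycle f.

Lemma Lcocycle_root0 : f.[0] = 0.
Proof.
have := congr1 (horner^~ 1) (Lcocycle_at0 Lf).
rewrite /Lcoboundary !(hornerZ, hornerD, hornerX, hornerC) beta0 mul0r addr0 mulr1.
by move/esym/eqP; rewrite mulf_eq0 (negbTE Delta_neq0) orbF => /eqP.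
Qed.

Lemma Lcocycle_euler : 'X * f^`() = (Delta + 1) *: f - (Delta * f^`().[0]) *: 'X.
Proof.
apply: poly_eq_horner => l; have := congr1 (fun p => p^`().[0]) (Lslice_eq0 l Lf).
rewrite /Lslice !(derivE, deriv_comp).
rewrite !(hornerD, hornerN, hornerM, hornerZ, hornerX, hornerC, horner_comp, horner0).
rewrite Lcocycle_root0 beta0.
rewrite !add0r => E; apply: (eq_by_multiple (-1) E); ring.
Qed.

Lemma Lcocycle_euler2 : 'X * f^`()^`()
  = 2%:R *: f^`() - (2%:R * f^`().[0])%:P - (Delta * f^`()^`().[0]) *: 'X.
Proof.
apply: poly_eq_horner => l.
have := congr1 (fun p => p^`()^`().[0]) (Lslice_eq0 l Lf).
rewrite /Lslice !(derivE, deriv_comp).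
rewrite !(hornerD, hornerN, hornerM, hornerZ, hornerX, hornerC, horner_comp, horner0).
rewrite beta0.
by rewrite !add0r => E; apply: (eq_by_multiple (-1) E); ring.
Qed.

Lemma Lcocycle_coef_weight n : (1 < n)%N -> (n.-1%:R - Delta) * f`_n = 0.
Proof.
case: n => [|[|k]] // _.
have := congr1 (fun p : {poly C} => p`_k.+2) Lcocycle_euler.
rewrite coefXM coefB !coefZ coefX coef_deriv /= mulr0 subr0 => E.
by apply: (eq_by_multiple 1 E); ring.
Qed.

Lemma Lcocycle_coef_gt3 n : (3 < n)%N -> f`_n = 0.
Proof.
case: n => [|[|[|[|k]]]] // _.
have := congr1 (fun p : {poly C} => p`_k.+3) Lcocycle_euler2.
rewrite coefXM !coefB !coefZ coefX coefC !coef_deriv /= mulr0 !subr0 => E.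
have : f`_k.+4 * (k.+4 * k.+1)%:R = 0 by apply: (eq_by_multiple 1 E); ring.
by move/eqP; rewrite mulf_eq0 pnatr_eq0 orbF => /eqP.
Qed.

Lemma Lcocycle_binomial n :
  (1 < n)%N -> Delta = n.-1%:R -> f = f`_1 *: 'X + f`_n *: 'X^n.
Proof.
case: n => [|[|n]] // _ Dn; apply/polyP => i.
rewrite coefD !coefZ coefX coefXn.
have [-> | i_neq_n] := eqVneq i n.+2; first by rewrite /= mulr0 mulr1 add0r.
case: i i_neq_n => [|[|i]] i_neq_n; rewrite /= ?mulr0 ?mulr1 ?addr0 //.
  by rewrite -horner_coef0 Lcocycle_root0.
have := Lcocycle_coef_weight i.+2 isT; move/eqP; rewrite mulf_eq0 Dn subr_eq0 eqr_nat.
by rewrite -eqSS (negbTE i_neq_n) => /eqP.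
Qed.

Lemma Lcocycle_linear : Delta != 1 -> Delta != 2 -> f = f`_1 *: 'X.
Proof.
move=> D1 D2; apply/polyP => -[|[|[|[|i]]]]; rewrite coefZ coefX /= ?mulr0 ?mulr1 //.
- by rewrite -horner_coef0 Lcocycle_root0.
- move/eqP: (Lcocycle_coef_weight 2 isT).
  by rewrite mulf_eq0 subr_eq0 eq_sym (negbTE D1) => /eqP.
- move/eqP: (Lcocycle_coef_weight 3 isT).
  by rewrite mulf_eq0 subr_eq0 eq_sym (negbTE D2) => /eqP.
- exact: Lcocycle_coef_gt3.
Qed.

End CriticalShift.

Lemma Lcocycle_Xn a n :
  beta = 0 -> (1 < n <= 3)%N -> Delta = n.-1%:R -> Lcocycle (a *: 'X^n).
Proof.
move=> beta0; case: n => [|[|[|[|n]]]] // _ Dn l m.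
all: by rewrite !(hornerZ, hornerXn) beta0 Dn /=; ring.
Qed.

Lemma ext_equiv_addX a f g h : beta = 0 -> Delta != 0 ->
  ext_equiv alpha Delta gamma (a *: 'X + f) g h f g h.
Proof.
move=> beta0 Delta_neq0; apply/ext_equivP; split=> //; exists (- a / Delta).
by rewrite Lcoboundary_beta0 // scalerA mulfVK // scaleNr [a *: 'X + f]addrC addrK.
Qed.

Lemma LcocycleZ t {f} : Lcocycle f -> Lcocycle (t *: f).
Proof. by move=> Lf l m; rewrite !hornerZ; apply: (eq_by_multiple t (Lf l m)); ring. Qed.

Lemma YcocycleZ t {h} : Ycocycle h -> Ycocycle (t *: h).
Proof. by move=> Yh l m; rewrite !hornerZ; apply: (eq_by_multiple t (Yh l m)); ring. Qed.

Lemma is_extZ t {f g h} : is_ext alpha Delta gamma f g h ->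
  is_ext alpha Delta gamma (t *: f) (t *: g) (t *: h).
Proof.
case/is_extP=> Lf -> Yh; apply/is_extP; rewrite scaler0.
by split=> //; [exact: LcocycleZ | exact: YcocycleZ].
Qed.

Lemma ext_trivialZ {t f g h} : t != 0 ->
  ext_trivial alpha Delta gamma (t *: f) (t *: g) (t *: h) ->
  ext_trivial alpha Delta gamma f g h.
Proof.
move=> t_neq0 /ext_trivialP [[c fc] tg th]; apply/ext_trivialP; split.
- by exists (t^-1 * c); rewrite -scalerA -fc scalerK.
- by apply: (scalerI t_neq0); rewrite tg scaler0.
- by apply: (scalerI t_neq0); rewrite th scaler0.
Qed.

Lemma coboundary_Lcoboundary c : coboundary alpha Delta gamma (c *: Lcoboundary) 0 0.
Proof.
split; last by apply/ext_trivialP; split=> //; exists c.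
apply/is_extP; split=> //; first exact: Lcocycle_Lcoboundary.
by rewrite -polyC0; apply/YcocycleC; left.
Qed.

Section Generator.
Context {f0 g0 h0 : {poly C}}.
Hypothesis gen_ext : is_ext alpha Delta gamma f0 g0 h0.
Hypothesis gen_nontrivial : ~ ext_trivial alpha Delta gamma f0 g0 h0.
Hypothesis gen_spans : forall f g h, is_ext alpha Delta gamma f g h ->
  exists t, ext_equiv alpha Delta gamma f g h (t *: f0) (t *: g0) (t *: h0).

Lemma nontrivial_ext_gen t : t != 0 ->
  nontrivial_ext alpha Delta gamma (t *: f0) (t *: g0) (t *: h0).
Proof. by move=> t_neq0; split; [exact: is_extZ | move/(ext_trivialZ t_neq0)]. Qed.

Lemma nontrivial_ext_equiv_gen f g h : nontrivial_ext alpha Delta gamma f g h ->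
  exists t, t != 0 /\ ext_equiv alpha Delta gamma f g h (t *: f0) (t *: g0) (t *: h0).
Proof.
case=> /gen_spans [t fgh_t] fgh_nontrivial; exists t; split=> //.
by apply: contra_notN fgh_nontrivial => /eqP t0; rewrite t0 !scale0r in fgh_t.
Qed.

Lemma Ext_dim1_gen : Ext_dim1 alpha Delta gamma.
Proof.
exists f0, g0, h0; split=> [//|[_ //]|f g h /gen_spans [t /ext_equivP [[c tf] tg th]]].
exists t; rewrite tf tg th opprD addrA !subrr add0r -scaleNr.
exact: coboundary_Lcoboundary.
Qed.

End Generator.

Lemma ext_trivial_generic f g h : Delta != 0 ->
  ~~ ((beta == 0) && [|| Delta == 1, Delta == 2 | Delta == - (1 / 2%:R)]) ->
  is_ext alpha Delta gamma f g h -> ext_trivial alpha Delta gamma f g h.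
Proof.
move=> Delta_neq0 not_special /is_extP [Lf -> Yh]; apply/ext_trivialP; split=> //.
  have [beta0 | beta_neq0] := eqVneq beta 0.
    move: not_special; rewrite beta0 eqxx => /norP [D1 /norP [D2 _]].
    exists (f`_1 / Delta); rewrite {1}(Lcocycle_linear beta0 Delta_neq0 Lf D1 D2).
    by rewrite Lcoboundary_beta0 // scalerA divfK.
  exists (f.[0] / beta); apply: (scalerI beta_neq0).
  by rewrite Lcocycle_at0 // scalerA mulrCA mulfV // mulr1.
apply: (Ycocycle_eq0 Yh) => beta0; apply: contraNneq not_special => Dh.
by rewrite beta0 Dh !eqxx !orbT.
Qed.

Lemma ext_classification_Xn n : beta = 0 -> (1 < n <= 3)%N -> Delta = n.-1%:R ->
  [/\ forall a, a != 0 -> nontrivial_ext alpha Delta gamma (a *: 'X^n) 0 0,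
      forall f g h, nontrivial_ext alpha Delta gamma f g h ->
        exists a, a != 0 /\ ext_equiv alpha Delta gamma f g h (a *: 'X^n) 0 0
    & Ext_dim1 alpha Delta gamma].
Proof.
move=> beta0 n_range Dn; have n_gt1 : (1 < n)%N by case/andP: n_range.
have Delta_neq0 : Delta != 0.
  by move: n_gt1 Dn; case: n {n_range} => [|[|n]] // _ ->; rewrite pnatr_eq0.
have gen_ext : is_ext alpha Delta gamma 'X^n 0 0.
  apply/is_extP; split=> //; last by rewrite -polyC0; apply/YcocycleC; left.
  by rewrite -[X in Lcocycle X]scale1r; exact: Lcocycle_Xn.
have gen_nontrivial : ~ ext_trivial alpha Delta gamma 'X^n 0 0.
  case/ext_trivialP=> [[c /(congr1 (fun p : {poly C} => p`_n)) Xc] _ _]; move: Xc.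
  rewrite Lcoboundary_beta0 // coefXn eqxx !coefZ coefX.
  by rewrite (gtn_eqF n_gt1) !mulr0 => /eqP; rewrite oner_eq0.
have gen_spans f g h : is_ext alpha Delta gamma f g h ->
    exists t, ext_equiv alpha Delta gamma f g h (t *: 'X^n) (t *: 0) (t *: 0).
  case/is_extP=> Lf -> Yh; exists f`_n; rewrite !scaler0.
  have -> : h = 0 by apply: (Ycocycle_eq0 Yh) => _; rewrite Dn natr_neq_mhalf.
  rewrite {1}(Lcocycle_binomial beta0 Delta_neq0 Lf n n_gt1 Dn).
  exact: ext_equiv_addX.
split.
- move=> a a_neq0; have := nontrivial_ext_gen gen_ext gen_nontrivial a a_neq0.
  by rewrite scaler0.
- move=> f g h /(nontrivial_ext_equiv_gen gen_spans) [a [a_neq0 fgh_a]].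
  by exists a; rewrite !scaler0 in fgh_a.
- exact: Ext_dim1_gen gen_ext gen_nontrivial gen_spans.
Qed.

Lemma ext_classification_const : beta = 0 -> Delta = - (1 / 2%:R) ->
  [/\ forall b, b != 0 -> nontrivial_ext alpha Delta gamma 0 0 b%:P,
      forall f g h, nontrivial_ext alpha Delta gamma f g h ->
        exists b, b != 0 /\ ext_equiv alpha Delta gamma f g h 0 0 b%:P
    & Ext_dim1 alpha Delta gamma].
Proof.
move=> beta0 Dh.
have Delta_neq0 : Delta != 0 by rewrite Dh oppr_eq0 mul1r invr_eq0 pnatr_eq0.
have gen_ext : is_ext alpha Delta gamma 0 0 1.
  apply/is_extP; split=> //.
    by rewrite -(scale0r Lcoboundary); exact: Lcocycle_Lcoboundary.
  by rewrite -polyC1; apply/YcocycleC; right.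
have gen_nontrivial : ~ ext_trivial alpha Delta gamma 0 0 1.
  by case/ext_trivialP=> _ _ /eqP; rewrite oner_eq0.
have gen_spans f g h : is_ext alpha Delta gamma f g h ->
    exists t, ext_equiv alpha Delta gamma f g h (t *: 0) (t *: 0) (t *: 1).
  case/is_extP=> Lf -> Yh; exists h.[0]; rewrite !scaler0 alg_polyC -(Ycocycle_const Yh).
  have D1 : Delta != 1 by rewrite Dh eq_sym; exact: (natr_neq_mhalf C 1).
  have D2 : Delta != 2 by rewrite Dh eq_sym; exact: (natr_neq_mhalf C 2).
  rewrite (Lcocycle_linear beta0 Delta_neq0 Lf D1 D2) -[_ *: 'X]addr0.
  exact: ext_equiv_addX.
split.
- move=> b b_neq0; have := nontrivial_ext_gen gen_ext gen_nontrivial b b_neq0.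
  by rewrite !scaler0 alg_polyC.
- move=> f g h /(nontrivial_ext_equiv_gen gen_spans) [b [b_neq0 fgh_b]].
  by exists b; rewrite !scaler0 alg_polyC in fgh_b.
- exact: Ext_dim1_gen gen_ext gen_nontrivial gen_spans.
Qed.

End Extensions.

Theorem theorem3p2 (R : realType) (alpha gamma Delta : R[i]) (hD : Delta != 0) :
  ((exists f g h : {poly R[i]}, nontrivial_ext alpha Delta gamma f g h) <->
     (alpha + gamma = 0 /\ (Delta = 1 \/ Delta = 2 \/ Delta = - (1 / 2%:R))))
  /\ (alpha + gamma = 0 -> Delta = 1 ->
        [/\ (forall a2 : R[i], a2 != 0 ->
               nontrivial_ext alpha Delta gamma (a2 *: 'X^2) 0 0),
            (forall f g h, nontrivial_ext alpha Delta gamma f g h ->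
               exists a2 : R[i], a2 != 0 /\
                 ext_equiv alpha Delta gamma f g h (a2 *: 'X^2) 0 0)
          & Ext_dim1 alpha Delta gamma])
  /\ (alpha + gamma = 0 -> Delta = 2 ->
        [/\ (forall a3 : R[i], a3 != 0 ->
               nontrivial_ext alpha Delta gamma (a3 *: 'X^3) 0 0),
            (forall f g h, nontrivial_ext alpha Delta gamma f g h ->
               exists a3 : R[i], a3 != 0 /\
                 ext_equiv alpha Delta gamma f g h (a3 *: 'X^3) 0 0)
          & Ext_dim1 alpha Delta gamma])
  /\ (alpha + gamma = 0 -> Delta = - (1 / 2%:R) ->
        [/\ (forall b0 : R[i], b0 != 0 ->
               nontrivial_ext alpha Delta gamma 0 0 b0%:P),
            (forall f g h, nontrivial_ext alpha Delta gamma f g h ->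
               exists b0 : R[i], b0 != 0 /\
                 ext_equiv alpha Delta gamma f g h 0 0 b0%:P)
          & Ext_dim1 alpha Delta gamma]).
Proof.
have class_X2 := @ext_classification_Xn _ alpha Delta gamma 2.
have class_X3 := @ext_classification_Xn _ alpha Delta gamma 3.
have class_const := @ext_classification_const _ alpha Delta gamma.
split; last split; last split; last exact: class_const.
- split=> [[f [g [h [fgh_ext fgh_nontrivial]]]] | [beta0 [D | [D | D]]]].
  + have /andP [/eqP beta0 special] :
        (alpha + gamma == 0) && [|| Delta == 1, Delta == 2 | Delta == - (1 / 2%:R)].
      by apply/negPn/negP => generic; apply/fgh_nontrivial/ext_trivial_generic.
    by split=> //; case/or3P: special => /eqP D; [left | right; left | right; right].
  + have [nt _ _] := class_X2 beta0 isT D.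
    by exists (1 *: 'X^2), 0, 0; exact: nt (oner_neq0 _).
  + have [nt _ _] := class_X3 beta0 isT D.
    by exists (1 *: 'X^3), 0, 0; exact: nt (oner_neq0 _).
  + have [nt _ _] := class_const beta0 D.
    by exists 0, 0, 1%:P; exact: nt (oner_neq0 _).
- by move=> beta0 D; exact: class_X2.
- by move=> beta0 D; exact: class_X3.
Qed.
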